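(* Let $n\ge 1$ and let $\mathbf{P}_A,\mathbf{P}_B,\mathbf{Q}_A,\mathbf{Q}_B\in\mathbb{R}^{n\times n}$ be symmetric positive definite matrices; put $\mathbf{C}_A=\mathbf{P}_A+\mathbf{Q}_A$, $\mathbf{C}_B=\mathbf{P}_B+\mathbf{Q}_B$. Let $J$ be an increasing cost function (see context). Let $(\mathbf{K},\mathbf{B}_F)$, with $\mathbf{K}=(\mathbf{K}_A,\mathbf{K}_B)$, define a conservative fusion. Then $(\mathbf{K},\mathbf{B}_F)$ is a solution of the Optimal Fusion with Split Covariances problem (minimize $J(\mathbf{B}_F)$ over all conservative fusions $(\mathbf{K},\mathbf{B}_F)$) if and only if there exists $\omega^*\in\arg\min_{\omega\in[0,1]} J(\mathbf{B}_{\mathrm{SCI}}(\omega))$ such that $\mathbf{B}_F=\mathbf{B}_{\mathrm{SCI}}(\omega^* )$.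
   Context: $\mathcal{A}_{\mathrm{Split}}=\{\mathbf{M}\in\mathbb{R}^{n\times n} : \begin{bmatrix}\mathbf{P}_A & \mathbf{M}\\ \mathbf{M}^\intercal & \mathbf{P}_B\end{bmatrix}\succeq 0\}$ (set of admissible cross-covariances). For gains $\mathbf{K}=(\mathbf{K}_A,\mathbf{K}_B)$ of $n\times n$ matrices and $\mathbf{P}_{AB}\in\mathcal{A}_{\mathrm{Split}}$, define $\mathbf{C}_F(\mathbf{K},\mathbf{P}_{AB})=\mathbf{K}_A\mathbf{C}_A\mathbf{K}_A^\intercal+\mathbf{K}_A\mathbf{P}_{AB}\mathbf{K}_B^\intercal+\mathbf{K}_B\mathbf{P}_{AB}^\intercal\mathbf{K}_A^\intercal+\mathbf{K}_B\mathbf{C}_B\mathbf{K}_B^\intercal$. A pair $(\mathbf{K},\mathbf{B}_F)$ with $\mathbf{B}_F$ a symmetric matrix defines a conservative fusion if $\mathbf{K}_A+\mathbf{K}_B=\mathbf{I}$ and $\mathbf{B}_F\succeq\mathbf{C}_F(\mathbf{K},\mathbf{P}_{AB})$ for all $\mathbf{P}_{AB}\in\mathcal{A}_{\mathrm{Split}}$. For $\omega\in[0,1]$ and $\bar\omega=1-\omega$, the SCI bound is defined by $\mathbf{B}_{\mathrm{SCI}}(\omega)^{-1}=\omega(\mathbf{P}_A+\omega\mathbf{Q}_A)^{-1}+\bar\omega(\mathbf{P}_B+\bar\omega\mathbf{Q}_B)^{-1}$. A cost function $J$ on symmetric positive semidefinite matrices is increasing if $\mathbf{P}\preceq\mathbf{Q}$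 implies $J(\mathbf{P})\le J(\mathbf{Q})$, and $\mathbf{P}\preceq\mathbf{Q}$ with $\mathbf{P}\neq\mathbf{Q}$ implies $J(\mathbf{P})<J(\mathbf{Q})$. Here $\preceq$ is the Loewner order. *)

From mathcomp Require Import all_boot all_order all_algebra.
From mathcomp Require Import reals.
Set Implicit Arguments. Unset Strict Implicit. Unset Printing Implicit Defensive.
Import Order.TTheory GRing.Theory Num.Theory.
Local Open Scope ring_scope.

Section Defs.
Variables (R : realType) (n : nat).

Definition symmx (M : 'M[R]_n) : Prop := M^T = M.

Definition psdmx (M : 'M[R]_n) : Prop :=
  symmx M /\ forall x : 'cV[R]_n, 0 <= (x^T *m M *m x) 0 0.

Definition pdmx (M : 'M[R]_n) : Prop :=
  symmx M /\ forall x : 'cV[R]_n, x != 0 -> 0 < (x^T *m M *m x) 0 0.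

Definition loewner_le (P Q : 'M[R]_n) : Prop := psdmx (Q - P).

Definition A_split (PA PB M : 'M[R]_n) : Prop :=
  forall x : 'cV[R]_(n + n),
    0 <= (x^T *m block_mx PA M M^T PB *m x) 0 0.

Definition C_F (KA KB CA CB PAB : 'M[R]_n) : 'M[R]_n :=
  KA *m CA *m KA^T + KA *m PAB *m KB^T + KB *m PAB^T *m KA^T
  + KB *m CB *m KB^T.

Definition conservative_fusion (PA PB QA QB KA KB BF : 'M[R]_n) : Prop :=
  [/\ KA + KB = 1%:M, symmx BF &
      forall PAB, A_split PA PB PAB ->
        loewner_le (C_F KA KB (PA + QA) (PB + QB) PAB) BF].

Definition B_SCI (PA PB QA QB : 'M[R]_n) (w : R) : 'M[R]_n :=
  invmx (w *: invmx (PA + w *: QA) + (1 - w) *: invmx (PB + (1 - w) *: QB)).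

Definition increasing_cost (J : 'M[R]_n -> R) : Prop :=
  forall P Q, psdmx P -> psdmx Q -> loewner_le P Q ->
    J P <= J Q /\ (P != Q -> J P < J Q).

Definition optimal_fusion (PA PB QA QB : 'M[R]_n) (J : 'M[R]_n -> R)
  (KA KB BF : 'M[R]_n) : Prop :=
  conservative_fusion PA PB QA QB KA KB BF /\
  forall KA' KB' BF', conservative_fusion PA PB QA QB KA' KB' BF' ->
    J BF <= J BF'.

End Defs.

(* Write a u, b u, f u for the quadratic forms of K_A P_A K_A^T, K_B P_B K_B^T
   and B_F - K_A Q_A K_A^T - K_B Q_B K_B^T.  Every SCI bound is achievable:
   for 0 < w < 1, B_SCI(w) is the parallel sum B of P_A/w + Q_A and
   P_B/(1-w) + Q_B, and the gains B (P_A/w + Q_A)^-1, B (P_B/(1-w) + Q_B)^-1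
   fuse below B for every admissible cross-covariance.  Conversely, testing a
   conservative fusion against rank-one cross-covariances gives
   f >= (sqrt a + sqrt b)^2, i.e. (1-w) a + w b <= w (1-w) f at the weight
   where (1-w)^2 a = w^2 b.  Among the directions violating this inequality
   at a given w, the sign of (1-w)^2 a - w^2 b is constant, so a
   connectedness argument on [0,1] yields a single w valid in all directions;
   then B_SCI(w) <= B_F, since the parallel sum minimizes over splittings
   u = K_A^T u + K_B^T u.  As J is increasing, the optimal fusions are
   exactly the minimizers of J over the SCI bounds. *)

From mathcomp Require Import all_boot all_order all_algebra.
From mathcomp Require Import reals boolp classical_sets polyrcf.
From mathcomp Require Import ring lra.
Import Order.TTheory GRing.Theory Num.Theory.
Local Open Scope classical_set_scope.
Local Open Scope ring_scope.
Set Implicit Arguments. Unset Strict Implicit. Unset Printing Implicit Defensive.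

Section QuadraticForm.
Variables (R : comRingType) (n : nat).
Implicit Types (x y z : 'cV[R]_n) (A M N : 'M[R]_n).

Definition vdot x y : R := (x^T *m y) 0 0.
Definition qform M x : R := vdot x (M *m x).

Lemma vdotC x y : vdot x y = vdot y x.
Proof. by rewrite /vdot -[x^T *m y]trmxK trmx_mul trmxK mxE. Qed.

Lemma vdotDr x y z : vdot x (y + z) = vdot x y + vdot x z.
Proof. by rewrite /vdot mulmxDr mxE. Qed.

Lemma vdotZr c x y : vdot x (c *: y) = c * vdot x y.
Proof. by rewrite /vdot -scalemxAr mxE. Qed.

Lemma vdotNr x y : vdot x (- y) = - vdot x y.
Proof. by rewrite -scaleN1r vdotZr mulN1r. Qed.

Lemma vdotBr x y z : vdot x (y - z) = vdot x y - vdot x z.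
Proof. by rewrite vdotDr vdotNr. Qed.

Lemma vdotDl x y z : vdot (x + y) z = vdot x z + vdot y z.
Proof. by rewrite vdotC vdotDr !(vdotC z). Qed.

Lemma vdotZl c x y : vdot (c *: x) y = c * vdot x y.
Proof. by rewrite vdotC vdotZr vdotC. Qed.

Lemma vdot0l x : vdot 0 x = 0.
Proof. by rewrite -(scale0r 0) vdotZl mul0r. Qed.

Lemma vdot_rank1 c x y p q :
  vdot p (c *: (x *m y^T) *m q) = c * vdot p x * vdot q y.
Proof.
rewrite -scalemxAl -mulmxA [y^T *m q]mx11_scalar mul_mx_scalar !vdotZr.
by rewrite -/(vdot y q) vdotC [vdot q y * _]mulrC mulrA.
Qed.

Lemma vdot_trmx A x y : vdot x (A *m y) = vdot (A^T *m x) y.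
Proof. by rewrite /vdot trmx_mul trmxK mulmxA. Qed.

Lemma qformE M x : (x^T *m M *m x) 0 0 = qform M x.
Proof. by rewrite /qform /vdot mulmxA. Qed.

Lemma qformD M N x : qform (M + N) x = qform M x + qform N x.
Proof. by rewrite /qform mulmxDl vdotDr. Qed.

Lemma qformB M N x : qform (M - N) x = qform M x - qform N x.
Proof. by rewrite /qform mulmxBl vdotBr. Qed.

Lemma qformZ c M x : qform (c *: M) x = c * qform M x.
Proof. by rewrite /qform -scalemxAl vdotZr. Qed.

Lemma qform0v M : qform M 0 = 0.
Proof. by rewrite /qform vdot0l. Qed.

Lemma qformZv c M x : qform M (c *: x) = c ^+ 2 * qform M x.
Proof. by rewrite /qform -scalemxAr vdotZl vdotZr mulrA. Qed.

Lemma qformNv M x : qform M (- x) = qform M x.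
Proof. by rewrite -scaleN1r qformZv sqrrN expr1n mul1r. Qed.

Lemma qform_conj A M x : qform (A *m M *m A^T) x = qform M (A^T *m x).
Proof. by rewrite /qform -!mulmxA vdot_trmx. Qed.

Lemma qformDv M x y : M^T = M ->
  qform M (x + y) = qform M x + 2 * vdot x (M *m y) + qform M y.
Proof.
move=> sM; have yMx : vdot y (M *m x) = vdot x (M *m y).
  by rewrite vdot_trmx sM vdotC.
by rewrite /qform mulmxDr !vdotDl !vdotDr yMx; ring.
Qed.

Lemma qform_comb M s t x y : M^T = M ->
  qform M (s *: x + t *: y)
  = s ^+ 2 * qform M x + 2 * (s * t * vdot x (M *m y)) + t ^+ 2 * qform M y.
Proof.
by move=> sM; rewrite qformDv // !qformZv -scalemxAr vdotZl vdotZr; ring.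
Qed.

End QuadraticForm.

Section ScalarInequalities.
Variable R : realFieldType.

Lemma sqr_le_mul_of_quadratic_ge0 (p a x : R) : 0 <= x ->
  (forall t, 0 <= p + 2 * t * a + t ^+ 2 * x) -> a ^+ 2 <= p * x.
Proof.
move=> x_ge0 quad_ge0; have [x0|x_neq0] := eqVneq x 0.
  rewrite x0 mulr0 in quad_ge0 *.
  have [->|a_neq0] := eqVneq a 0; first by rewrite expr0n.
  have := quad_ge0 (- (p + 1) / (2 * a)).
  have -> : p + 2 * (- (p + 1) / (2 * a)) * a + (- (p + 1) / (2 * a)) ^+ 2 * 0
            = -1 by field; rewrite a_neq0.
  by rewrite ler0N1.
have x_gt0 : 0 < x by rewrite lt_def x_neq0.
have := quad_ge0 (- a / x).
have -> : p + 2 * (- a / x) * a + (- a / x) ^+ 2 * x = (p * x - a ^+ 2) / x.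
  by field.
by rewrite pmulr_lge0 ?invr_gt0 // subr_ge0.
Qed.

Lemma add_cross_term_ge0 (p q al be l a b : R) :
  0 <= p -> 0 <= q -> 0 <= a -> 0 <= b ->
  al ^+ 2 <= p * a -> be ^+ 2 <= q * b -> l ^+ 2 * a * b <= 1 ->
  0 <= p + 2 * (l * al * be) + q.
Proof.
move=> p_ge0 q_ge0 a_ge0 b_ge0 al_le be_le l_le.
set t := l * al * be.
have t_le : t ^+ 2 <= p * q.
  have albe : al ^+ 2 * be ^+ 2 <= (p * a) * (q * b)
    by apply: ler_pM; rewrite ?sqr_ge0.
  rewrite !exprMn -mulrA (le_trans (ler_wpM2l (sqr_ge0 l) albe)) //.
  have -> : l ^+ 2 * (p * a * (q * b)) = (l ^+ 2 * a * b) * (p * q) by ring.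
  by rewrite ler_piMl // mulr_ge0.
rewrite leNgt; apply/negP => neg.
have : (p + 2 * t + q) * (p + q - 2 * t) < 0 by rewrite pmulr_llt0 //; lra.
have -> : (p + 2 * t + q) * (p + q - 2 * t) = (p - q) ^+ 2 + 4 * (p * q - t ^+ 2)
  by ring.
have := sqr_ge0 (p - q); lra.
Qed.

Lemma balanced_weight_bound (a b f w : R) : 0 <= a -> 0 <= b -> 0 <= w <= 1 ->
  (forall l, l ^+ 2 * a * b <= 1 -> a + b + 2 * (l * a * b) <= f) ->
  (1 - w) ^+ 2 * a = w ^+ 2 * b ->
  (1 - w) * a + w * b <= w * (1 - w) * f.
Proof.
move=> a_ge0 b_ge0 /andP[w_ge0 w_le1] cross bal.
have ww_ge0 : 0 <= w * (1 - w) by rewrite mulr_ge0 // subr_ge0.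
have [a0|a_neq0] := eqVneq a 0.
  have := cross 0; rewrite a0 !mulr0 !mul0r ler01 mulr0 add0r addr0.
  move=> /(_ isT) f_ge.
  move: bal; rewrite a0 mulr0 => /esym bal.
  have := ler_wpM2l ww_ge0 f_ge; lra.
have [w1|w_neq1] := eqVneq w 1.
  move: bal; rewrite w1 subrr expr1n expr2 !(mul0r, mul1r) => <-.
  by rewrite add0r.
have a_gt0 : 0 < a by rewrite lt_def a_neq0.
have w_lt1 : 0 < 1 - w by rewrite subr_gt0 lt_neqAle w_neq1.
set l := w / ((1 - w) * a).
have l_le : l ^+ 2 * a * b <= 1.
  have -> : l ^+ 2 * a * b = (w ^+ 2 * b) / ((1 - w) ^+ 2 * a)
    by rewrite /l; field; rewrite ?gt_eqF.
  by rewrite -bal divff // mulf_neq0 ?gt_eqF ?exprn_gt0.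
have := ler_wpM2l ww_ge0 (cross l l_le).
have -> : w * (1 - w) * (a + b + 2 * (l * a * b))
          = (1 - w) * a + w * b + (w ^+ 2 * b - (1 - w) ^+ 2 * a)
  by rewrite /l; field; rewrite ?gt_eqF.
by rewrite bal subrr addr0.
Qed.

End ScalarInequalities.

Lemma horner_gt0_near (R : rcfType) (p q : {poly R}) x :
  0 < p.[x] -> 0 < q.[x] ->
  exists2 d, 0 < d & forall y, `|y - x| < d -> 0 < p.[y] /\ 0 < q.[y].
Proof.
move=> px_gt0 qx_gt0.
have [dp dp_gt0 near_p] := poly_cont x p px_gt0.
have [dq dq_gt0 near_q] := poly_cont x q qx_gt0.
exists (Num.min dp dq) => [|y]; first by rewrite lt_min dp_gt0 dq_gt0.
rewrite lt_min => /andP[/near_p + /near_q].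
by rewrite !ltr_distl !subrr => /andP[-> _] /andP[-> _].
Qed.

Section CommonNonnegativeWeight.
Variables (R : realType) (U : Type) (G D : U -> {poly R}).

Hypothesis G_ge0_of_D_eq0 :
  forall (w : R) u, 0 <= w <= 1 -> (D u).[w] = 0 -> 0 <= (G u).[w].
Hypothesis D_sign_on_G_neg : forall (w : R) u v, 0 <= w <= 1 ->
  (G u).[w] < 0 -> (G v).[w] < 0 -> (D u).[w] < 0 -> (D v).[w] <= 0.
Hypothesis D_ge0_at0 : forall u, 0 <= (D u).[0].
Hypothesis D_le0_at1 : forall u, (D u).[1] <= 0.

(* The common weight is the supremum of the weights at which [G u < 0 < D u]
   for some [u]: near it the signs of [G u] and [D u] persist. *)
Lemma exists_common_nonneg_weight :
  exists2 w, 0 <= w <= 1 & forall u, 0 <= (G u).[w].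
Proof.
have D_neq0 (w : R) u : 0 <= w <= 1 -> (G u).[w] < 0 -> (D u).[w] != 0.
  by move=> w01 Gw; apply/eqP => /(G_ge0_of_D_eq0 w01); rewrite leNgt Gw.
pose T := [set w : R | 0 <= w <= 1 /\ exists u, (G u).[w] < 0 /\ 0 < (D u).[w]].
have [[t0 Tt0]|T0] := pselect (T !=set0); last first.
  have w01 : 0 <= (0 : R) <= 1 by rewrite lexx ler01.
  exists 0 => // u; rewrite leNgt; apply/negP => G0; apply: T0; exists 0.
  by split=> //; exists u; split=> //; rewrite lt_def D_neq0 ?D_ge0_at0.
have supT : has_sup T by split; [exists t0 | exists 1 => w [/andP[]]].
set s := sup T.
have le_s : forall t, T t -> t <= s by move=> t; apply: sup_upper_bound.
have s01 : 0 <= s <= 1.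
  rewrite (le_trans _ (le_s _ Tt0)); last by case: Tt0 => /andP[].
  by rewrite ge_sup //; [exists t0 | move=> w [/andP[]]].
exists s => // u; rewrite leNgt; apply/negP => Gs.
have := D_neq0 _ _ s01 Gs; rewrite neq_lt => /orP[Ds|Ds].
- have [d d_gt0 near_s] :=
    @horner_gt0_near R (- G u) (- D u) s ltac:(by rewrite hornerN oppr_gt0)
                                          ltac:(by rewrite hornerN oppr_gt0).
  have [t Tt st] := sup_adherent d_gt0 supT.
  have ts : `|t - s| < d.
    rewrite -/s in st; have := le_s t Tt; rewrite ltr_distl => ?.
    by apply/andP; split; lra.
  case: Tt => t01 [v [Gv Dv]].
  have [] := near_s t ts; rewrite !hornerN !oppr_gt0 => Gt Dt.
  by have := D_sign_on_G_neg t01 Gt Gv Dt; rewrite leNgt Dv.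
- have [d d_gt0 near_s] :=
    @horner_gt0_near R (- G u) (D u) s ltac:(by rewrite hornerN oppr_gt0) Ds.
  have s_lt1 : s < 1.
    rewrite lt_neqAle; case/andP: s01 => _ ->; rewrite andbT.
    by apply: contraTneq Ds => ->; rewrite -leNgt D_le0_at1.
  pose t := Num.min (s + d / 2) 1.
  have ts : `|t - s| < d.
    rewrite ltr_distl lt_min gt_min; apply/andP; split.
      by apply/andP; split; lra.
    by apply/orP; left; lra.
  have [Gt Dt] := near_s t ts; rewrite hornerN oppr_gt0 in Gt.
  have Tt : T t.
    split; last by exists u.
    by rewrite ge_min lexx orbT andbT le_min; apply/andP; split; lra.
  by have := le_s t Tt; rewrite ge_min => /orP[]; lra.
Qed.

End CommonNonnegativeWeight.

(* If [qform D] changed sign on the region [qform P < 0], the segment joining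
   the two witnesses (oriented so that the cross term of [P] is nonpositive)
   would cross the cone [qform D = 0] inside that region. *)
Lemma qform_sign_on_neg (R : rcfType) n (P D : 'M[R]_n) v w :
  P^T = P -> D^T = D -> (forall z, qform D z = 0 -> 0 <= qform P z) ->
  qform P v < 0 -> qform P w < 0 -> qform D v < 0 -> qform D w <= 0.
Proof.
move=> sP sD P_ge0 Pv Pw Dv; rewrite leNgt; apply/negP => Dw.
wlog cross : w Pw Dw / vdot v (P *m w) <= 0.
  move=> base; have [|cross] := leP (vdot v (P *m w)) 0; first exact: base.
  by apply: (base (- w)); rewrite ?qformNv // mulmxN vdotNr oppr_le0 ltW.
pose z s := s *: v + (1 - s) *: w.
pose p : {poly R} := 'X ^+ 2 * (qform D v)%:P
  + 'X * (1 - 'X) * (2 * vdot v (D *m w))%:P + (1 - 'X) ^+ 2 * (qform D w)%:P.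
have pE s : p.[s] = qform D (z s)
  by rewrite qform_comb // !hornerE /=; ring.
have z0 : z 0 = w by rewrite /z scale0r add0r subr0 scale1r.
have z1 : z 1 = v by rewrite /z subrr scale0r addr0 scale1r.
have p01 : p.[0] * p.[1] <= 0 by rewrite !pE z0 z1 pmulr_rle0 // ltW.
have [s /andP[s_ge0 s_le1] /eqP/esym ps] := polyrcf.poly_ivt ler01 p01.
have := P_ge0 (z s); rewrite -pE -ps => /(_ erefl); rewrite qform_comb //.
have cross_le0 : s * (1 - s) * vdot v (P *m w) <= 0.
  by rewrite mulr_ge0_le0 // mulr_ge0 // subr_ge0.
have w_le0 : (1 - s) ^+ 2 * qform P w <= 0 by rewrite mulr_ge0_le0 ?sqr_ge0 ?ltW.
have [s0|s_neq0] := eqVneq s 0.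
  by rewrite s0; lra.
have v_lt0 : s ^+ 2 * qform P v < 0.
  by rewrite pmulr_rlt0 // exprn_gt0 // lt_def s_neq0.
lra.
Qed.

Section UniformWeight.
Variables (R : realType) (n : nat) (A B F : 'M[R]_n).
Hypotheses (sA : A^T = A) (sB : B^T = B) (sF : F^T = F).
Hypotheses (A_ge0 : forall u, 0 <= qform A u) (B_ge0 : forall u, 0 <= qform B u).

Definition weighted_gap (w : R) : 'M[R]_n :=
  (w * (1 - w)) *: F - ((1 - w) *: A + w *: B).

Definition weight_balance (w : R) : 'M[R]_n :=
  (1 - w) ^+ 2 *: A - w ^+ 2 *: B.

Lemma qform_weighted_gap w u : qform (weighted_gap w) u
  = w * (1 - w) * qform F u - ((1 - w) * qform A u + w * qform B u).
Proof. by rewrite qformB qformD !qformZ. Qed.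

Lemma qform_weight_balance w u : qform (weight_balance w) u
  = (1 - w) ^+ 2 * qform A u - w ^+ 2 * qform B u.
Proof. by rewrite qformB !qformZ. Qed.

Hypothesis balanced_bound : forall w u, 0 <= w <= 1 ->
  (1 - w) ^+ 2 * qform A u = w ^+ 2 * qform B u ->
  (1 - w) * qform A u + w * qform B u <= w * (1 - w) * qform F u.

Lemma exists_uniform_weight : exists2 w, 0 <= w <= 1 & forall u,
  (1 - w) * qform A u + w * qform B u <= w * (1 - w) * qform F u.
Proof.
pose G u : {poly R} := 'X * (1 - 'X) * (qform F u)%:P
  - ((1 - 'X) * (qform A u)%:P + 'X * (qform B u)%:P).
pose D u : {poly R} := (1 - 'X) ^+ 2 * (qform A u)%:P - 'X ^+ 2 * (qform B u)%:P.
have GE w u : (G u).[w] = qform (weighted_gap w) u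
  by rewrite qform_weighted_gap !hornerE /=; ring.
have DE w u : (D u).[w] = qform (weight_balance w) u
  by rewrite qform_weight_balance !hornerE /=; ring.
have [|w u v w01 Gu Gv Du|u|u|w w01 Gw] := @exists_common_nonneg_weight R _ G D.
- move=> w u w01; rewrite GE DE qform_weighted_gap qform_weight_balance.
  by move/eqP; rewrite subr_eq0 subr_ge0 => /eqP /(balanced_bound w01).
- move: Gu Gv Du; rewrite !GE !DE; apply: qform_sign_on_neg.
  + by rewrite /weighted_gap !linearD !linearN !linearZ /= sA sB sF.
  + by rewrite /weight_balance !linearD !linearN !linearZ /= sA sB.
  + move=> z; rewrite qform_weighted_gap qform_weight_balance.
    by move/eqP; rewrite subr_eq0 subr_ge0 => /eqP /(balanced_bound w01).
- by rewrite DE qform_weight_balance subr0 expr0n mul0r subr0 expr1n mul1r.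
- rewrite DE qform_weight_balance subrr expr0n mul0r sub0r expr1n mul1r.
  by rewrite oppr_le0.
by exists w => // u; have := Gw u; rewrite GE qform_weighted_gap subr_ge0.
Qed.

End UniformWeight.

Section PositiveMatrices.
Variables (R : realType) (n : nat).
Implicit Types (x u : 'cV[R]_n) (M N P Q : 'M[R]_n).

Lemma pdmx_sym M : pdmx M -> M^T = M.
Proof. by case. Qed.

Lemma pdmx_qform_gt0 M x : pdmx M -> x != 0 -> 0 < qform M x.
Proof. by case=> _ M_gt0 /M_gt0; rewrite qformE. Qed.

Lemma pdmx_qform_ge0 M x : pdmx M -> 0 <= qform M x.
Proof.
move=> pdM; have [->|x_neq0] := eqVneq x 0; first by rewrite qform0v.
exact/ltW/pdmx_qform_gt0.
Qed.

Lemma pdmx_qform_eq0 M x : pdmx M -> qform M x = 0 -> x = 0.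
Proof.
move=> pdM Mx0; apply: contraTeq isT => /(pdmx_qform_gt0 pdM).
by rewrite Mx0 ltxx.
Qed.

Lemma pdmx_psd M : pdmx M -> psdmx M.
Proof.
by move=> pdM; split=> [|x]; [case: pdM | rewrite qformE pdmx_qform_ge0].
Qed.

Lemma pdmx_unit M : pdmx M -> M \in unitmx.
Proof.
move=> pdM; rewrite unitmxE unitfE; apply/negP => /det0P[v v_neq0 vM0].
have vT_neq0 : v^T != 0 by rewrite -(inj_eq (@trmx_inj _ _ _)) trmxK trmx0.
have := pdmx_qform_gt0 pdM vT_neq0.
by rewrite /qform /vdot trmxK mulmxA vM0 mul0mx mxE ltxx.
Qed.

Lemma pdmxD M N : pdmx M -> pdmx N -> pdmx (M + N).
Proof.
move=> pdM pdN; split=> [|x x_neq0]; first by rewrite /symmx linearD /= !pdmx_sym.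
by rewrite qformE qformD ltr_wpDl ?pdmx_qform_ge0 ?pdmx_qform_gt0.
Qed.

Lemma pdmxZ c M : 0 < c -> pdmx M -> pdmx (c *: M).
Proof.
move=> c_gt0 pdM; split=> [|x x_neq0].
  by rewrite /symmx linearZ /= pdmx_sym.
by rewrite qformE qformZ mulr_gt0 ?pdmx_qform_gt0.
Qed.

Lemma pdmx_inv M : pdmx M -> pdmx (invmx M).
Proof.
move=> pdM; have uM := pdmx_unit pdM; have sM := pdmx_sym pdM.
split=> [|x x_neq0]; first by rewrite /symmx trmx_inv sM.
rewrite qformE /qform.
have -> : x = M *m (invmx M *m x) by rewrite mulKVmx.
rewrite mulKmx // vdotC; apply: pdmx_qform_gt0 => //.
apply: contra x_neq0 => /eqP Mx0.
by rewrite -[x](mulKVmx uM) Mx0 mulmx0.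
Qed.

Lemma mx_eq0_of_mulmx (A : 'M[R]_n) : (forall x, A *m x = 0) -> A = 0.
Proof.
move=> A0; apply/matrixP => i j.
have := congr1 (fun c : 'cV[R]_n => c i 0) (A0 (delta_mx j 0)).
by rewrite -colE !mxE.
Qed.

Lemma eq0_of_qform_conj_le0 (K : 'M[R]_n) P : pdmx P ->
  (forall u, qform (K *m P *m K^T) u <= 0) -> K = 0.
Proof.
move=> pdP KPK_le0; apply: trmx_inj; rewrite trmx0; apply: mx_eq0_of_mulmx => u.
apply: (pdmx_qform_eq0 pdP); apply/eqP; rewrite eq_le pdmx_qform_ge0 // andbT.
by rewrite -qform_conj.
Qed.

Lemma qform_cauchy_schwarz M p x : psdmx M ->
  vdot p (M *m x) ^+ 2 <= qform M p * qform M x.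
Proof.
case=> sM M_ge0; apply: sqr_le_mul_of_quadratic_ge0 => [|t].
  by rewrite -qformE.
have := M_ge0 (p + t *: x).
by rewrite qformE qformDv // qformZv -scalemxAr vdotZr mulrA.
Qed.

Lemma loewner_le_of_qform P Q : P^T = P -> Q^T = Q ->
  (forall u, qform P u <= qform Q u) -> loewner_le P Q.
Proof.
move=> sP sQ PQ; split=> [|u]; first by rewrite /symmx linearB /= sP sQ.
by rewrite qformE qformB subr_ge0.
Qed.

Lemma loewner_le_qform P Q u : loewner_le P Q -> qform P u <= qform Q u.
Proof. by case=> _ /(_ u); rewrite qformE qformB subr_ge0. Qed.

End PositiveMatrices.

Section FusionForms.
Variables (R : realType) (n : nat).
Implicit Types (x y u p q : 'cV[R]_n) (M PA PB CA CB KA KB : 'M[R]_n).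

Lemma A_splitP PA PB M : A_split PA PB M <->
  forall p q, 0 <= qform PA p + 2 * vdot p (M *m q) + qform PB q.
Proof.
have blockE p q : ((col_mx p q)^T *m block_mx PA M M^T PB *m col_mx p q) 0 0
                  = qform PA p + 2 * vdot p (M *m q) + qform PB q.
  rewrite tr_col_mx mul_row_block mul_row_col !mulmxDl mxE.
  rewrite [X in X + _]mxE [X in _ + X]mxE !qformE -!mulmxA.
  rewrite -/(vdot _ _) -/(vdot _ _).
  by rewrite vdot_trmx trmxK vdotC; ring.
split=> [splitM p q | M_ge0 x]; first by rewrite -blockE.
by rewrite -[x]vsubmxK blockE.
Qed.

Lemma qform_C_F KA KB CA CB M u : qform (C_F KA KB CA CB M) u
  = qform CA (KA^T *m u) + 2 * vdot (KA^T *m u) (M *m (KB^T *m u))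
    + qform CB (KB^T *m u).
Proof.
have crossE (K L N : 'M[R]_n) :
    qform (K *m N *m L^T) u = vdot (K^T *m u) (N *m (L^T *m u)).
  by rewrite /qform -!mulmxA vdot_trmx.
rewrite /C_F !qformD !qform_conj !crossE [in X in _ + X + _]vdot_trmx trmxK vdotC.
by ring.
Qed.

Lemma C_F_sym KA KB CA CB M : CA^T = CA -> CB^T = CB ->
  (C_F KA KB CA CB M)^T = C_F KA KB CA CB M.
Proof.
move=> sA sB; rewrite /C_F !linearD /= !trmx_mul !trmxK !mulmxA sA sB.
by rewrite -!addrA; congr (_ + _); rewrite addrCA.
Qed.

Lemma C_F_gainA CA CB M : C_F 1%:M 0 CA CB M = CA.
Proof. by rewrite /C_F trmx0 trmx1 !(mul0mx, mulmx0, mul1mx, mulmx1, addr0). Qed.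

Lemma C_F_gainB CA CB M : C_F 0 1%:M CA CB M = CB.
Proof. by rewrite /C_F trmx0 trmx1 !(mul0mx, mulmx0, mul1mx, mulmx1, add0r). Qed.

Lemma A_split0 PA PB : pdmx PA -> pdmx PB -> A_split PA PB 0.
Proof.
move=> pdA pdB; apply/A_splitP => p q.
by rewrite mul0mx vdotC vdot0l mulr0 addr0 addr_ge0 ?pdmx_qform_ge0.
Qed.

Lemma A_split_rank1 PA PB l x y : pdmx PA -> pdmx PB ->
  l ^+ 2 * qform PA x * qform PB y <= 1 ->
  A_split PA PB (l *: (PA *m x *m (PB *m y)^T)).
Proof.
move=> pdA pdB l_le; apply/A_splitP => p q.
rewrite vdot_rank1; apply: add_cross_term_ge0 l_le; rewrite ?pdmx_qform_ge0 //;
  exact/qform_cauchy_schwarz/pdmx_psd.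
Qed.

End FusionForms.

Section ParallelSum.
Variables (R : realType) (n : nat).
Implicit Types (x y u : 'cV[R]_n) (M DA DB : 'M[R]_n).

Lemma vdot_invmx M x y : M^T = M -> M \in unitmx ->
  vdot (invmx M *m x) (M *m y) = vdot x y.
Proof. by move=> sM uM; rewrite vdot_trmx sM mulmxA mulmxV // mul1mx. Qed.

Definition parallel_sum DA DB := invmx (invmx DA + invmx DB).

Lemma pdmx_parallel_sum DA DB : pdmx DA -> pdmx DB -> pdmx (parallel_sum DA DB).
Proof. by move=> pdA pdB; apply/pdmx_inv/pdmxD; apply: pdmx_inv. Qed.

Lemma parallel_sum_split DA DB u : pdmx DA -> pdmx DB ->
  let S := parallel_sum DA DB in invmx DA *m (S *m u) + invmx DB *m (S *m u) = u.
Proof.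
move=> pdA pdB S; have uS := pdmx_unit (pdmxD (pdmx_inv pdA) (pdmx_inv pdB)).
by rewrite -mulmxDl mulmxA /S /parallel_sum mulmxV // mul1mx.
Qed.

(* Completing the square around the optimal split of [x + y]. *)
Lemma qform_parallel_sum DA DB x y : pdmx DA -> pdmx DB ->
  let S := parallel_sum DA DB in let e := x - invmx DA *m (S *m (x + y)) in
  qform DA x + qform DB y = qform S (x + y) + qform DA e + qform DB e.
Proof.
move=> pdA pdB S e.
have [uA uB] := (pdmx_unit pdA, pdmx_unit pdB).
have [sA sB] := (pdmx_sym pdA, pdmx_sym pdB).
have sS : S^T = S by apply/pdmx_sym/pdmx_parallel_sum.
set u := x + y; set xs := invmx DA *m (S *m u); set ys := invmx DB *m (S *m u).
have xsys : xs + ys = u by apply: parallel_sum_split.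
have xE : x = xs + e by rewrite /e addrC subrK.
have yE : y = ys + - e.
  by rewrite -[y](addKr x) -/u -xsys xE opprD addrACA addNr add0r addrC.
have SuE : qform S u = vdot (S *m u) xs + vdot (S *m u) ys.
  by rewrite -vdotDr xsys /qform vdotC.
have xsE : vdot xs (DA *m e) = vdot (S *m u) e by rewrite vdot_invmx.
have ysE : vdot ys (DB *m e) = vdot (S *m u) e by rewrite vdot_invmx.
have qxsE : qform DA xs = vdot (S *m u) xs by rewrite /qform vdot_invmx.
have qysE : qform DB ys = vdot (S *m u) ys by rewrite /qform vdot_invmx.
clearbody e xs ys; rewrite SuE xE yE !qformDv // qformNv mulmxN vdotNr.
by rewrite xsE ysE qxsE qysE; ring.
Qed.

Lemma qform_parallel_sum_le DA DB x y : pdmx DA -> pdmx DB ->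
  qform (parallel_sum DA DB) (x + y) <= qform DA x + qform DB y.
Proof.
move=> pdA pdB; rewrite qform_parallel_sum //.
by rewrite -addrA lerDl addr_ge0 ?pdmx_qform_ge0.
Qed.

Lemma qform_parallel_sum_opt DA DB u : pdmx DA -> pdmx DB ->
  let S := parallel_sum DA DB in
  qform S u = qform DA (invmx DA *m (S *m u)) + qform DB (invmx DB *m (S *m u)).
Proof.
move=> pdA pdB S; rewrite qform_parallel_sum // parallel_sum_split // subrr.
by rewrite !qform0v !addr0.
Qed.

End ParallelSum.

Section SplitCovarianceIntersection.
Variables (R : realType) (n : nat) (PA PB QA QB : 'M[R]_n).
Hypotheses (pdPA : pdmx PA) (pdPB : pdmx PB) (pdQA : pdmx QA) (pdQB : pdmx QB).

Lemma B_SCI0 : B_SCI PA PB QA QB 0 = PB + QB.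
Proof. by rewrite /B_SCI subr0 !scale1r !scale0r add0r invmxK. Qed.

Lemma B_SCI1 : B_SCI PA PB QA QB 1 = PA + QA.
Proof. by rewrite /B_SCI subrr !scale1r !scale0r addr0 invmxK. Qed.

Definition sci_covA (w : R) := w^-1 *: PA + QA.
Definition sci_covB (w : R) := (1 - w)^-1 *: PB + QB.

Lemma pdmx_sci_cov w : 0 < w < 1 -> pdmx (sci_covA w) /\ pdmx (sci_covB w).
Proof.
case/andP=> w_gt0 w_lt1.
by split; apply: pdmxD => //; apply: pdmxZ; rewrite // invr_gt0 ?subr_gt0.
Qed.

Lemma B_SCI_parallel_sum w : 0 < w < 1 ->
  B_SCI PA PB QA QB w = parallel_sum (sci_covA w) (sci_covB w).
Proof.
case/andP=> w_gt0 w_lt1.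
have infoE c P Q : 0 < c -> pdmx P -> pdmx Q ->
    invmx (c^-1 *: P + Q) = c *: invmx (P + c *: Q).
  move=> c_gt0 pdP pdQ; have c_neq0 : c != 0 by rewrite gt_eqF.
  have -> : c^-1 *: P + Q = c^-1 *: (P + c *: Q).
    by rewrite scalerDr scalerA mulVf // scale1r.
  rewrite invmxZ ?invrK //; apply/pdmx_unit/pdmxZ; rewrite ?invr_gt0 //.
  exact/pdmxD/pdmxZ.
by rewrite /B_SCI /parallel_sum /sci_covA /sci_covB !infoE // subr_gt0.
Qed.

Lemma loewner_lexx (M : 'M[R]_n) : loewner_le M M.
Proof.
rewrite /loewner_le subrr; split=> [|x]; first by rewrite /symmx trmx0.
by rewrite mulmx0 mul0mx mxE.
Qed.

Lemma conservative_gainA : conservative_fusion PA PB QA QB 1%:M 0 (PA + QA).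
Proof.
split=> [|/=|PAB _]; first by rewrite addr0.
- exact/pdmx_sym/pdmxD.
- by rewrite C_F_gainA; apply: loewner_lexx.
Qed.

Lemma conservative_gainB : conservative_fusion PA PB QA QB 0 1%:M (PB + QB).
Proof.
split=> [|/=|PAB _]; first by rewrite add0r.
- exact/pdmx_sym/pdmxD.
- by rewrite C_F_gainB; apply: loewner_lexx.
Qed.

Lemma conservative_B_SCI_interior w : 0 < w < 1 ->
  let S := parallel_sum (sci_covA w) (sci_covB w) in
  conservative_fusion PA PB QA QB
    (S *m invmx (sci_covA w)) (S *m invmx (sci_covB w)) (B_SCI PA PB QA QB w).
Proof.
move=> w01 S; have /andP[w_gt0 w_lt1] := w01.
have [pdA pdB] := pdmx_sci_cov w01.
have pdS : pdmx S by apply: pdmx_parallel_sum.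
rewrite B_SCI_parallel_sum // -/S; split.
- rewrite -mulmxDr /S /parallel_sum mulVmx //.
  by apply/pdmx_unit/pdmxD; apply: pdmx_inv.
- exact: pdmx_sym.
move=> PAB splitPAB; apply: loewner_le_of_qform => [||u].
- by apply: C_F_sym; apply/pdmx_sym/pdmxD.
- exact: pdmx_sym.
rewrite qform_C_F.
have gainE (D : 'M[R]_n) : pdmx D -> (S *m invmx D)^T *m u = invmx D *m (S *m u).
  by move=> pdD; rewrite trmx_mul trmx_inv !pdmx_sym // mulmxA.
rewrite !gainE // qform_parallel_sum_opt // -/S.
set x := invmx _ *m _; set y := invmx _ *m _.
have := (A_splitP PA PB PAB).1 splitPAB ((1 - w) *: x) (- w *: y).
rewrite -scalemxAr vdotZl vdotZr !qformZv /sci_covA /sci_covB !qformD !qformZ.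
set a := qform PA x; set b := qform PB y; set m := vdot x (PAB *m y) => split_ge0.
(* dividing the admissibility of [((1 - w) x, - w y)] by [w (1 - w)] *)
rewrite -subr_ge0.
have -> : w^-1 * a + qform QA x + ((1 - w)^-1 * b + qform QB y)
          - (a + qform QA x + 2 * m + (b + qform QB y))
        = ((1 - w) ^+ 2 * a + 2 * ((1 - w) * (- w * m)) + (- w) ^+ 2 * b)
          / (w * (1 - w)) by field; rewrite ?gt_eqF ?subr_gt0.
by rewrite divr_ge0 // mulr_ge0 // ltW // subr_gt0.
Qed.

Lemma conservative_B_SCI w : 0 <= w <= 1 ->
  exists KA KB, conservative_fusion PA PB QA QB KA KB (B_SCI PA PB QA QB w).
Proof.
case/andP=> w_ge0 w_le1.
have [->|w_neq0] := eqVneq w 0.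
  by rewrite B_SCI0; exists 0, 1%:M; apply: conservative_gainB.
have [->|w_neq1] := eqVneq w 1.
  by rewrite B_SCI1; exists 1%:M, 0; apply: conservative_gainA.
have w01 : 0 < w < 1 by rewrite !lt_neqAle eq_sym w_neq0 w_neq1 w_ge0 w_le1.
by do 2 eexists; apply: conservative_B_SCI_interior.
Qed.

End SplitCovarianceIntersection.

Section ConservativeFusion.
Variables (R : realType) (n : nat) (PA PB QA QB KA KB BF : 'M[R]_n).
Hypotheses (pdPA : pdmx PA) (pdPB : pdmx PB) (pdQA : pdmx QA) (pdQB : pdmx QB).
Hypothesis cons : conservative_fusion PA PB QA QB KA KB BF.

Let A := KA *m PA *m KA^T.
Let B := KB *m PB *m KB^T.
Let F := BF - KA *m QA *m KA^T - KB *m QB *m KB^T.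

Lemma conservative_qform_bound M u : A_split PA PB M ->
  qform A u + 2 * vdot (KA^T *m u) (M *m (KB^T *m u)) + qform B u <= qform F u.
Proof.
case: cons => _ _ /(_ M) le_BF /le_BF /(loewner_le_qform u).
by rewrite /F /A /B !qformB qform_C_F !qformD !qform_conj; lra.
Qed.

Lemma conservative_cross_bound l u : l ^+ 2 * qform A u * qform B u <= 1 ->
  qform A u + qform B u + 2 * (l * qform A u * qform B u) <= qform F u.
Proof.
rewrite /A /B !qform_conj => l_le.
have := conservative_qform_bound u (A_split_rank1 pdPA pdPB l_le).
by rewrite vdot_rank1 -!/(qform _ _) /A /B !qform_conj; lra.
Qed.

Lemma trmx_conj (K M : 'M[R]_n) : M^T = M -> (K *m M *m K^T)^T = K *m M *m K^T.
Proof. by move=> sM; rewrite !trmx_mul trmxK sM mulmxA. Qed.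

Lemma conservative_uniform_weight : exists2 w : R, 0 <= w <= 1 & forall u,
  (1 - w) * qform A u + w * qform B u <= w * (1 - w) * qform F u.
Proof.
have A_ge0 u : 0 <= qform A u by rewrite qform_conj pdmx_qform_ge0.
have B_ge0 u : 0 <= qform B u by rewrite qform_conj pdmx_qform_ge0.
apply: exists_uniform_weight => // [|||w u w01].
- exact/trmx_conj/pdmx_sym.
- exact/trmx_conj/pdmx_sym.
- by case: cons => _ sBF _; rewrite /F !linearB /= sBF !trmx_conj // pdmx_sym.
- by apply: balanced_weight_bound => // l; apply: conservative_cross_bound.
Qed.

Lemma conservative_psd : psdmx BF.
Proof.
split=> [|u]; first by case: cons.
have := conservative_qform_bound u (A_split0 pdPA pdPB).
rewrite mul0mx vdotC vdot0l mulr0 addr0 qformE /A /B /F !qformB !qform_conj.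
have := pdmx_qform_ge0 (KA^T *m u) pdPA; have := pdmx_qform_ge0 (KB^T *m u) pdPB.
have := pdmx_qform_ge0 (KA^T *m u) pdQA; have := pdmx_qform_ge0 (KB^T *m u) pdQB.
lra.
Qed.

Lemma conservative_ge_CB : (forall u, qform A u <= 0) -> loewner_le (PB + QB) BF.
Proof.
move=> A_le0; have [KAB _ le_BF] := cons.
have KA0 : KA = 0 := eq0_of_qform_conj_le0 pdPA A_le0.
have KB1 : KB = 1%:M by rewrite -KAB KA0 add0r.
by have := le_BF 0 (A_split0 pdPA pdPB); rewrite KA0 KB1 C_F_gainB.
Qed.

Lemma conservative_ge_CA : (forall u, qform B u <= 0) -> loewner_le (PA + QA) BF.
Proof.
move=> B_le0; have [KAB _ le_BF] := cons.
have KB0 : KB = 0 := eq0_of_qform_conj_le0 pdPB B_le0.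
have KA1 : KA = 1%:M by rewrite -KAB KB0 addr0.
by have := le_BF 0 (A_split0 pdPA pdPB); rewrite KA1 KB0 C_F_gainA.
Qed.

Lemma B_SCI_le_conservative :
  exists2 w : R, 0 <= w <= 1 & loewner_le (B_SCI PA PB QA QB w) BF.
Proof.
have [w /andP[w_ge0 w_le1] uniform] := conservative_uniform_weight.
have [w0|w_neq0] := eqVneq w 0.
  exists 0; first by rewrite lexx ler01.
  rewrite B_SCI0; apply: conservative_ge_CB => u.
  by have := uniform u; rewrite w0; lra.
have [w1|w_neq1] := eqVneq w 1.
  exists 1; first by rewrite lexx ler01.
  rewrite B_SCI1; apply: conservative_ge_CA => u.
  by have := uniform u; rewrite w1; lra.
have w01 : 0 < w < 1 by rewrite !lt_neqAle eq_sym w_neq0 w_neq1 w_ge0 w_le1.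
have [pdA pdB] := pdmx_sci_cov pdPA pdPB pdQA pdQB w01.
exists w; first by rewrite w_ge0 w_le1.
have [KAB sBF _] := cons.
rewrite B_SCI_parallel_sum //; apply: loewner_le_of_qform => [||u] //.
  exact/pdmx_sym/pdmx_parallel_sum.
have split_u : KA^T *m u + KB^T *m u = u.
  by rewrite -mulmxDl -linearD /= KAB trmx1 mul1mx.
rewrite -{1}split_u; apply: le_trans (qform_parallel_sum_le _ _ pdA pdB) _.
have := uniform u; rewrite /sci_covA /sci_covB /A /B /F !qformB !qformD !qformZ.
rewrite !qform_conj; set a := qform PA _; set b := qform PB _ => weighted.
have ww_gt0 : 0 < w * (1 - w).
  by case/andP: w01 => w_gt0 w_lt1; rewrite mulr_gt0 // subr_gt0.
have -> : w^-1 * a + qform QA (KA^T *m u)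
          + ((1 - w)^-1 * b + qform QB (KB^T *m u))
          = ((1 - w) * a + w * b) / (w * (1 - w))
            + qform QA (KA^T *m u) + qform QB (KB^T *m u).
  by field; rewrite w_neq0 andbT subr_eq0 eq_sym.
suff : ((1 - w) * a + w * b) / (w * (1 - w))
       <= qform BF u - qform QA (KA^T *m u) - qform QB (KB^T *m u) by lra.
by rewrite ler_pdivrMr //; lra.
Qed.

End ConservativeFusion.

Theorem theorem1 (R : realType) (n : nat) (hn : (0 < n)%N)
  (PA PB QA QB : 'M[R]_n)
  (hPA : pdmx PA) (hPB : pdmx PB) (hQA : pdmx QA) (hQB : pdmx QB)
  (J : 'M[R]_n -> R) (hJ : increasing_cost J)
  (KA KB BF : 'M[R]_n)
  (hcons : conservative_fusion PA PB QA QB KA KB BF) :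
  optimal_fusion PA PB QA QB J KA KB BF <->
  exists w : R,
    [/\ 0 <= w <= 1,
        (forall w' : R, 0 <= w' <= 1 ->
           J (B_SCI PA PB QA QB w) <= J (B_SCI PA PB QA QB w')) &
        BF = B_SCI PA PB QA QB w].
Proof.
have SCI_cons w := conservative_B_SCI hPA hPB hQA hQB (w := w).
have SCI_psd w : 0 <= w <= 1 -> psdmx (B_SCI PA PB QA QB w).
  by move=> /SCI_cons[KA' [KB' /(conservative_psd hPA hPB hQA hQB)]].
have J_SCI KA' KB' BF' : conservative_fusion PA PB QA QB KA' KB' BF' ->
    exists2 w, 0 <= w <= 1 & J (B_SCI PA PB QA QB w) <= J BF'
      /\ (B_SCI PA PB QA QB w != BF' -> J (B_SCI PA PB QA QB w) < J BF').
  move=> cons'.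
  have [w w01 le_BF'] := B_SCI_le_conservative hPA hPB hQA hQB cons'.
  exists w => //; apply: hJ le_BF'; first exact: SCI_psd.
  exact: conservative_psd cons'.
split=> [[_ opt] | [w [w01 w_min BF_eq]]].
- have opt_SCI w : 0 <= w <= 1 -> J BF <= J (B_SCI PA PB QA QB w).
    by move=> /SCI_cons[KA' [KB' /opt]].
  have [w w01 [_ lt_BF]] := J_SCI _ _ _ hcons.
  have BF_eq : BF = B_SCI PA PB QA QB w.
    by apply/esym/eqP; apply: contraTT (opt_SCI w w01) => /lt_BF; rewrite -ltNge.
  by exists w; split=> //; rewrite -BF_eq.
- split=> // KA' KB' BF' cons'; rewrite BF_eq.
  have [w' w'01 [le_BF' _]] := J_SCI _ _ _ cons'.
  exact: le_trans (w_min w' w'01) le_BF'.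
Qed.
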